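(* A terminating $2$-structure on a discrete category is quasicycle-free.
   Context: A $2$-structure $\mathcal{S}=\langle\mathcal{F},\theta_{\mathcal{F}},\mathcal{T},\theta_{\mathcal{T}}\rangle$ on a category $\mathscr{C}$ consists of a graded set $\mathcal{F}$ of function symbols, a set $\theta_{\mathcal{F}}$ of equations between terms, a set $\mathcal{T}$ of labelled reduction rules between congruence classes of terms, and a set $\theta_{\mathcal{T}}$ of equations between reductions with equal source and target; reductions are generated from morphisms $[f]$ of $\mathscr{C}$ by function symbols, rule applications $\tau(\varphi_1,\dots,\varphi_n):[F(\bar s/\bar x)]\to[G(\bar t/\bar x)]$ and composition, and $\theta_{\mathcal{T}}$ always contains all instances of the identity, associativity, functoriality and naturality equations. $\mathbb{F}_{\mathscr{C}}(\mathcal{S})$ is the category of classes of terms over $\mathrm{Ob}(\mathscr{C})$ and reductions modulo the congruence generated by $\theta_{\mathcal{T}}$. $\mathcal{S}$ is terminating if, whenever $\mathscr{C}$ is discrete, every infinite chain $t_1\xrightarrow{\alpha_1}t_2\xrightarrow{\alpha_2}t_3\to\cdots$ in $\mathbb{F}_{\mathscr{C}}(\mathcal{S})$ contains cofinitely many identity reductions. A morphism $\varphi$ is irreducible if $\varphi=\varphi_1\cdot\varphi_2$ implies $\varphi_1=1$ or $\varphi_2=1$; $\mathrm{Red}_{\mathcal{S},\mathscr{C}}$ has vertices the objects of $\mathbb{F}_{\mathscr{C}}(\mathcal{S})$ and edges the irreducible morphisms. A quasicycle in a directed graph is a pair $(T,t)$, $T$ an infinite chain $t_0\to t_1\to\cdots$,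 $t$ a vertex with a path $t_i\to t$ for all $i$. $\mathcal{S}$ is quasicycle-free if every quasicycle in $\mathrm{Red}_{\mathcal{S},\mathscr{C}}$ contains cofinitely many identity reductions. *)

From mathcomp Require Import all_boot.

Set Implicit Arguments.
Unset Strict Implicit.
Unset Printing Implicit Defensive.

(* compA f g is the composite "first f then g" (= g o f), meaningful    *)
(* when cod f = dom g.                                                  *)
Record category := Category {
  Ob : Type;
  Arr : Type;
  dom : Arr -> Ob;
  cod : Arr -> Ob;
  idA : Ob -> Arr;
  compA : Arr -> Arr -> Arr;
  dom_id : forall a, dom (idA a) = a;
  cod_id : forall a, cod (idA a) = a;
  dom_comp : forall f g, cod f = dom g -> dom (compA f g) = dom f;
  cod_comp : forall f g, cod f = dom g -> cod (compA f g) = cod g;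
  comp_id_l : forall f, compA (idA (dom f)) f = f;
  comp_id_r : forall f, compA f (idA (cod f)) = f;
  comp_assoc : forall f g h, cod f = dom g -> cod g = dom h ->
      compA (compA f g) h = compA f (compA g h)
}.

Definition discrete (C : category) : Prop :=
  forall f : Arr C, f = idA (dom f).

Record signature := Signature { sym : Type; arity : sym -> nat }.

Inductive term (Sg : signature) (X : Type) : Type :=
| Leaf : X -> term Sg X
| App : forall f : sym Sg, ('I_(arity f) -> term Sg X) -> term Sg X.

Arguments Leaf {Sg X} _.

Arguments App {Sg X} f _.

Fixpoint subst (Sg : signature) (X Y : Type) (sigma : X -> term Sg Y)
    (t : term Sg X) : term Sg Y :=
  match t with
  | Leaf x => sigma x
  | App f a => App f (fun i => subst sigma (a i))
  end.

(* The 1-dimensional part of a 2-structure on C:                      *)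
(*   F (graded function symbols), theta_F (equations between terms in  *)
(*   variables), T (labelled rules tau : [F] -> [G] between terms in    *)
(*   the variables x_1..x_n, n = rar tau).                              *)
Record rewrite_data := RewriteData {
  sg : signature;
  eqF : term sg nat -> term sg nat -> Prop;
  rule : Type;
  rar : rule -> nat;
  rlhs : forall r : rule, term sg 'I_(rar r);
  rrhs : forall r : rule, term sg 'I_(rar r)
}.

Section Reductions.
Variables (C : category) (P : rewrite_data).

Definition cterm := term (sg P) (Ob C).

Inductive convF : cterm -> cterm -> Prop :=
| convF_refl t : convF t t
| convF_sym t u : convF t u -> convF u t
| convF_trans t u v : convF t u -> convF u v -> convF t v
| convF_ctx (f : sym (sg P)) (a b : 'I_(arity f) -> cterm) :
    (forall i, convF (a i) (b i)) -> convF (App f a) (App f b)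
| convF_ax (l r : term (sg P) nat) (sigma : nat -> cterm) :
    eqF l r -> convF (subst sigma l) (subst sigma r).

(* raw reduction expressions: [f], F(phi_1..phi_n), tau(phi_1..phi_n),
   composition phi . psi (diagrammatic order: first phi, then psi) *)
Inductive red : Type :=
| RMor : Arr C -> red
| RFun : forall f : sym (sg P), ('I_(arity f) -> red) -> red
| RRule : forall r : rule P, ('I_(rar r) -> red) -> red
| RComp : red -> red -> red.
Arguments RFun f _ : clear implicits.
Arguments RRule r _ : clear implicits.

(* typing: rty phi s t  means  phi : [s] -> [t] *)
Inductive rty : red -> cterm -> cterm -> Prop :=
| rty_mor (f : Arr C) : rty (RMor f) (Leaf (dom f)) (Leaf (cod f))
| rty_fun (f : sym (sg P)) (phi : 'I_(arity f) -> red) (s t : 'I_(arity f) -> cterm) :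
    (forall i, rty (phi i) (s i) (t i)) -> rty (RFun f phi) (App f s) (App f t)
| rty_rule (r : rule P) (phi : 'I_(rar r) -> red) (s t : 'I_(rar r) -> cterm) :
    (forall i, rty (phi i) (s i) (t i)) ->
    rty (RRule r phi) (subst s (rlhs r)) (subst t (rrhs r))
| rty_comp phi psi s t u : rty phi s t -> rty psi t u -> rty (RComp phi psi) s u
| rty_conv phi s t s' t' : rty phi s t -> convF s s' -> convF t t' -> rty phi s' t'.

Fixpoint rid (t : cterm) : red :=
  match t with
  | Leaf a => RMor (idA a)
  | App f a => RFun f (fun i => rid (a i))
  end.

Fixpoint lift (X : Type) (F : term (sg P) X) (phi : X -> red) : red :=
  match F with
  | Leaf x => phi x
  | App f a => RFun f (fun i => lift (a i) phi)
  end.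

(* congruence on reductions generated by theta_T together with all
   instances of the identity, associativity, functoriality and
   naturality equations (which theta_T always contains) *)
Inductive req (eqT : red -> red -> Prop) : red -> red -> Prop :=
| req_refl phi : req eqT phi phi
| req_sym phi psi : req eqT phi psi -> req eqT psi phi
| req_trans phi psi chi : req eqT phi psi -> req eqT psi chi -> req eqT phi chi
| req_ctx_fun (f : sym (sg P)) (phi psi : 'I_(arity f) -> red) :
    (forall i, req eqT (phi i) (psi i)) -> req eqT (RFun f phi) (RFun f psi)
| req_ctx_rule (r : rule P) (phi psi : 'I_(rar r) -> red) :
    (forall i, req eqT (phi i) (psi i)) -> req eqT (RRule r phi) (RRule r psi)
| req_ctx_comp phi phi' psi psi' :
    req eqT phi phi' -> req eqT psi psi' -> req eqT (RComp phi psi) (RComp phi' psi')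
| req_ax phi psi : eqT phi psi -> req eqT phi psi
| req_idl phi s t : rty phi s t -> req eqT (RComp (rid s) phi) phi
| req_idr phi s t : rty phi s t -> req eqT (RComp phi (rid t)) phi
| req_assoc phi psi chi s t u v :
    rty phi s t -> rty psi t u -> rty chi u v ->
    req eqT (RComp (RComp phi psi) chi) (RComp phi (RComp psi chi))
(* functoriality of C -> F_C(S)  ([1_A] = 1 holds by definition of rid) *)
| req_fun_C (f g : Arr C) :
    cod f = dom g -> req eqT (RMor (compA f g)) (RComp (RMor f) (RMor g))
(* functoriality of the function symbols (F(1,..,1) = 1 holds by
   definition of rid) *)
| req_fun_F (f : sym (sg P)) (phi psi : 'I_(arity f) -> red)
    (s t u : 'I_(arity f) -> cterm) :
    (forall i, rty (phi i) (s i) (t i)) -> (forall i, rty (psi i) (t i) (u i)) ->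
    req eqT (RFun f (fun i => RComp (phi i) (psi i))) (RComp (RFun f phi) (RFun f psi))
| req_nat_l (r : rule P) (phi : 'I_(rar r) -> red) (s t : 'I_(rar r) -> cterm) :
    (forall i, rty (phi i) (s i) (t i)) ->
    req eqT (RRule r phi) (RComp (lift (rlhs r) phi) (RRule r (fun i => rid (t i))))
| req_nat_r (r : rule P) (phi : 'I_(rar r) -> red) (s t : 'I_(rar r) -> cterm) :
    (forall i, rty (phi i) (s i) (t i)) ->
    req eqT (RRule r phi) (RComp (RRule r (fun i => rid (s i))) (lift (rrhs r) phi)).

End Reductions.

Record two_structure (C : category) := TwoStructure {
  tsP : rewrite_data;
  eqT : red C tsP -> red C tsP -> Prop;
  eqT_wf : forall phi psi, eqT phi psi ->
     exists s t, rty phi s t /\ rty psi s t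
}.
Arguments eqT {C} t _ _.

Section FC.
Variables (C : category) (S : two_structure C).

Local Notation P := (tsP S).
Local Notation tm := (cterm C P).
Local Notation rd := (red C P).

Definition meq (phi psi : rd) : Prop := req (eqT S) phi psi.

Definition is_identity (s : tm) (alpha : rd) : Prop := meq alpha (rid s).

Definition chain (t : nat -> tm) (alpha : nat -> rd) : Prop :=
  forall i, rty (alpha i) (t i) (t i.+1).

Definition cofinitely_identities (t : nat -> tm) (alpha : nat -> rd) : Prop :=
  exists N, forall i, N <= i -> is_identity (t i) (alpha i).

Definition terminating : Prop :=
  discrete C -> forall t alpha, chain t alpha -> cofinitely_identities t alpha.

Definition irreducible (s t : tm) (phi : rd) : Prop :=
  rty phi s t /\
  forall (u : tm) (phi1 phi2 : rd), rty phi1 s u -> rty phi2 u t ->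
    meq phi (RComp phi1 phi2) -> is_identity s phi1 \/ is_identity u phi2.

(* Red_{S,C}: vertices are the objects of F_C(S) (classes of terms),
   edges are irreducible morphisms.  Directed paths in Red: *)
Inductive red_path : tm -> tm -> Prop :=
| rp_nil s t : convF s t -> red_path s t
| rp_cons s u t phi : irreducible s u phi -> red_path u t -> red_path s t.

Definition quasicycle (t : nat -> tm) (alpha : nat -> rd) (v : tm) : Prop :=
  (forall i, irreducible (t i) (t i.+1) (alpha i)) /\
  (forall i, red_path (t i) v).

Definition quasicycle_free : Prop :=
  forall t alpha v, quasicycle t alpha v -> cofinitely_identities t alpha.

End FC.

(* The edges of a quasicycle are irreducible morphisms of F_C(S), so its
   underlying sequence is an infinite chain of F_C(S); termination then
   forces cofinitely many identities. *)
From mathcomp Require Import all_boot.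

Set Implicit Arguments.

Section Quasicycles.
Variables (C : category) (S : two_structure C).

Lemma irreducible_rty s t phi : @irreducible C S s t phi -> rty phi s t.
Proof. by case. Qed.

Lemma quasicycle_chain t alpha v : @quasicycle C S t alpha v -> chain t alpha.
Proof. by case=> irr_alpha _ i; apply: irreducible_rty. Qed.

End Quasicycles.

Theorem lemma3p17 (C : category) (S : two_structure C) :
  discrete C -> terminating S -> quasicycle_free S.
Proof.
move=> discC termS t alpha v qc.
exact: termS discC t alpha (quasicycle_chain qc).
Qed.
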